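(* Let $A=[x_0,x_1]$ and $B=[y_0,y_1]$ be closed real intervals. There is an algorithm which enumerates all solutions to the one-dimensional grid problem for $A$ and $B$, i.e., all $u\in\mathbb Z[\sqrt2]$ with $u\in A$ and $u^\bullet\in B$. Moreover, the algorithm only requires a constant number of arithmetic operations per solution produced.
   Context: $\mathbb Z[\sqrt2]=\{a+b\sqrt2 : a,b\in\mathbb Z\}\subseteq\mathbb R$, and for $u=a+b\sqrt2$ its conjugate is $u^\bullet=a-b\sqrt2$. Arithmetic operations are addition, subtraction, multiplication, division, exponentiation and logarithm. *)

From Stdlib Require Import Reals List ZArith.
Import ListNotations.
Open Scope R_scope.

Definition zsqrt2 (a b : Z) : R := IZR a + IZR b * sqrt 2.
Definition zsqrt2_conj (a b : Z) : R := IZR a - IZR b * sqrt 2.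

Definition grid1d_sol (x0 x1 y0 y1 : R) (a b : Z) : Prop :=
  x0 <= zsqrt2 a b <= x1 /\ y0 <= zsqrt2_conj a b <= y1.

Definition enumerates_grid1d (x0 x1 y0 y1 : R) (L : list (R * R)) : Prop :=
  NoDup L /\
  (forall p, In p L ->
     exists a b : Z, p = (IZR a, IZR b) /\ grid1d_sol x0 x1 y0 y1 a b) /\
  (forall a b : Z, grid1d_sol x0 x1 y0 y1 a b -> In (IZR a, IZR b) L).

(** * A real-RAM machine model (unit cost per executed instruction) *)

Inductive binop := OAdd | OSub | OMul | ODiv | OPow.

Definition eval_binop (o : binop) (x y : R) : R :=
  match o with
  | OAdd => x + y
  | OSub => x - y
  | OMul => x * y
  | ODiv => x / y
  | OPow => Rpower x y
  end.

Inductive instr :=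
  | IConst (d : nat) (c : Z)
  | IBin (o : binop) (d s1 s2 : nat)
  | ILn (d s : nat)
  | IFloor (d s : nat)
  | IJle (s1 s2 : nat) (l : nat)
  | IOut (s1 s2 : nat)
  | IHalt.

Record state := mkState { pc : nat; regs : nat -> R; out : list (R * R) }.

Definition upd (r : nat -> R) (d : nat) (v : R) : nat -> R :=
  fun i => if Nat.eqb i d then v else r i.

(** One step; [None] means the machine has halted (or is stuck, which we
    treat as halting). *)
Definition step (p : list instr) (s : state) : option state :=
  match nth_error p (pc s) with
  | None => None
  | Some i =>
    match i with
    | IConst d c => Some (mkState (S (pc s)) (upd (regs s) d (IZR c)) (out s))
    | IBin o d s1 s2 =>
        Some (mkState (S (pc s))
                (upd (regs s) d (eval_binop o (regs s s1) (regs s s2))) (out s))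
    | ILn d s1 => Some (mkState (S (pc s)) (upd (regs s) d (ln (regs s s1))) (out s))
    | IFloor d s1 =>
        Some (mkState (S (pc s)) (upd (regs s) d (IZR (Int_part (regs s s1)))) (out s))
    | IJle s1 s2 l =>
        if Rle_dec (regs s s1) (regs s s2)
        then Some (mkState l (regs s) (out s))
        else Some (mkState (S (pc s)) (regs s) (out s))
    | IOut s1 s2 =>
        Some (mkState (S (pc s)) (regs s) (out s ++ [(regs s s1, regs s s2)]))
    | IHalt => None
    end
  end.

Fixpoint exec (p : list instr) (n : nat) (s : state) : option state :=
  match n with
  | O => Some s
  | S n' => match step p s with Some s' => exec p n' s' | None => None end
  end.

Definition init_state (x0 x1 y0 y1 : R) : state :=
  mkState 0%nat
    (fun i => match i with 0%nat => x0 | 1%nat => x1 | 2%nat => y0 | 3%nat => y1 | _ => 0 end)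
    [].

Definition halts_with (p : list instr) (s : state) (n : nat) (L : list (R * R)) : Prop :=
  exists s', exec p n s = Some s' /\ step p s' = None /\ out s' = L.

(* Multiplication by lambda^-m, where lambda = 3 + 2 sqrt 2 is a unit of norm 1, is a bijection
   of Z[sqrt 2] carrying the solutions for (lambda^m A, lambda^-m B) onto those for (A, B).
   Choosing m with lambda^m |A| in [1, lambda) makes the scaled problem well conditioned.
   For a solution a + b sqrt 2 of the scaled problem, b ranges over an interval computable
   with one division, and for each b the admissible a form the integer interval
   [ceil (max (x0 - b sqrt 2) (y0 + b sqrt 2)), floor (min (x1 - b sqrt 2) (y1 + b sqrt 2))].
   If both scaled intervals have length at least 1, every such a-interval strictly inside the
   b-range is nonempty; otherwise the scaled lengths add up to less than 8 and at most three
   values of b occur.  So the number of b visited exceeds the number of solutions by at most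
   3, and each b and each solution costs a bounded number of instructions. *)

From Stdlib Require Import Reals List ZArith Lra Lia Psatz FinFun.
Import ListNotations.
Open Scope R_scope.

Lemma Int_part_frac t : 0 <= t - IZR (Int_part t) < 1.
Proof. destruct (base_Int_part t). lra. Qed.

Definition Zceil (t : R) : Z := (- Int_part (- t))%Z.

Lemma le_Int_part_iff t z : (z <= Int_part t)%Z <-> IZR z <= t.
Proof.
  destruct (Int_part_frac t) as [F1 F2]. split; intros H.
  - apply IZR_le in H. lra.
  - assert (IZR z < IZR (Int_part t + 1)) by (rewrite plus_IZR; lra).
    apply lt_IZR in H0. lia.
Qed.

Lemma Zceil_le_iff t z : (Zceil t <= z)%Z <-> t <= IZR z.
Proof.
  unfold Zceil. pose proof (le_Int_part_iff (- t) (- z)) as E. rewrite opp_IZR in E.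
  split; intros H.
  - assert (- IZR z <= - t) by (apply E; lia). lra.
  - assert (- z <= Int_part (- t))%Z by (apply E; lra). lia.
Qed.

Lemma Zceil_lt t : IZR (Zceil t) < t + 1.
Proof.
  unfold Zceil. rewrite opp_IZR. destruct (Int_part_frac (- t)). lra.
Qed.

Lemma Rdiv_le_iff x c y : 0 < c -> (x / c <= y <-> x <= y * c).
Proof. intros Hc. assert (x = x / c * c) by (field; lra). split; intros; nra. Qed.

Lemma Rle_div_iff x c y : 0 < c -> (y <= x / c <-> y * c <= x).
Proof. intros Hc. assert (x = x / c * c) by (field; lra). split; intros; nra. Qed.

Lemma Rmult_le_inv_l c d x y : 0 < c -> c * d = 1 -> (c * x <= y <-> x <= y * d).
Proof.
  intros Hc Hcd. assert (0 < d) by nra.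
  assert (x = c * x * d) by (transitivity (x * (c * d)); [rewrite Hcd | ]; ring).
  split; intros; nra.
Qed.

Lemma Rmult_ge_inv_l c d x y : 0 < c -> c * d = 1 -> (y <= c * x <-> y * d <= x).
Proof.
  intros Hc Hcd. assert (0 < d) by nra.
  assert (x = c * x * d) by (transitivity (x * (c * d)); [rewrite Hcd | ]; ring).
  split; intros; nra.
Qed.

Fixpoint Zrange (a : Z) (k : nat) : list Z :=
  match k with
  | O => []
  | S k => a :: Zrange (a + 1) k
  end.

Lemma In_Zrange k a x : In x (Zrange a k) <-> (a <= x < a + Z.of_nat k)%Z.
Proof. revert a. induction k; intros a; simpl; [|rewrite IHk]; lia. Qed.

Lemma NoDup_Zrange k a : NoDup (Zrange a k).
Proof.
  revert a. induction k; intros a; constructor; auto. rewrite In_Zrange. lia.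
Qed.

Lemma length_Zrange k a : length (Zrange a k) = k.
Proof. revert a. induction k; intros a; simpl; auto. Qed.

Lemma sqrt2_sqr : sqrt 2 * sqrt 2 = 2.
Proof. apply sqrt_sqrt; lra. Qed.

Lemma sqrt2_bounds : 4 / 3 < sqrt 2 < 3 / 2.
Proof. pose proof sqrt2_sqr. pose proof (sqrt_pos 2). split; nra. Qed.

Lemma Rpower_2_half : Rpower 2 (1 / 2) = sqrt 2.
Proof. replace (1 / 2) with (/ 2) by field. apply Rpower_sqrt; lra. Qed.

Lemma zsqrt2_mul a b c d :
  zsqrt2 a b * zsqrt2 c d = zsqrt2 (c * a + 2 * d * b) (d * a + c * b).
Proof.
  unfold zsqrt2. rewrite plus_IZR, plus_IZR, !mult_IZR.
  transitivity (IZR c * IZR a + IZR d * IZR b * (sqrt 2 * sqrt 2)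
    + (IZR d * IZR a + IZR c * IZR b) * sqrt 2); [ring|].
  rewrite sqrt2_sqr. ring.
Qed.

Lemma zsqrt2_conj_mul a b c d :
  zsqrt2_conj a b * zsqrt2_conj c d = zsqrt2_conj (c * a + 2 * d * b) (d * a + c * b).
Proof.
  unfold zsqrt2_conj. rewrite plus_IZR, plus_IZR, !mult_IZR.
  transitivity (IZR c * IZR a + IZR d * IZR b * (sqrt 2 * sqrt 2)
    - (IZR d * IZR a + IZR c * IZR b) * sqrt 2); [ring|].
  rewrite sqrt2_sqr. ring.
Qed.

Lemma zsqrt2_norm a b : zsqrt2 a b * zsqrt2_conj a b = IZR (a * a - 2 * b * b).
Proof.
  unfold zsqrt2, zsqrt2_conj. rewrite minus_IZR, !mult_IZR.
  transitivity (IZR a * IZR a - IZR b * IZR b * (sqrt 2 * sqrt 2)); [ring|].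
  rewrite sqrt2_sqr. ring.
Qed.

Lemma zsqrt2_conj_opp a b : zsqrt2_conj a (- b) = zsqrt2 a b.
Proof. unfold zsqrt2, zsqrt2_conj. rewrite opp_IZR. ring. Qed.

Lemma zsqrt2_opp a b : zsqrt2 a (- b) = zsqrt2_conj a b.
Proof. unfold zsqrt2, zsqrt2_conj. rewrite opp_IZR. ring. Qed.

Lemma zsqrt2_inv P Q : (P * P - 2 * Q * Q = 1)%Z -> / zsqrt2 P Q = zsqrt2_conj P Q.
Proof.
  intros HPQ. pose proof (zsqrt2_norm P Q) as Hn. rewrite HPQ in Hn.
  assert (zsqrt2 P Q <> 0) by (intros E; rewrite E in Hn; lra).
  apply (Rmult_eq_reg_l (zsqrt2 P Q)); auto. rewrite Rinv_r; auto.
Qed.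

Definition zmul (P Q : Z) (ab : Z * Z) : Z * Z :=
  (P * fst ab + 2 * Q * snd ab, Q * fst ab + P * snd ab)%Z.

Definition IZR_pair (ab : Z * Z) : R * R := (IZR (fst ab), IZR (snd ab)).

Lemma IZR_pair_inj u v : IZR_pair u = IZR_pair v -> u = v.
Proof.
  destruct u as [a b], v as [c d]. unfold IZR_pair. cbn [fst snd].
  intros E. injection E as E1 E2. apply eq_IZR in E1, E2. congruence.
Qed.

Lemma zmul_cancel P Q ab : (P * P - 2 * Q * Q = 1)%Z -> zmul P (- Q) (zmul P Q ab) = ab.
Proof.
  intros H. destruct ab as [a b]. unfold zmul; cbn [fst snd].
  f_equal.
  - transitivity ((P * P - 2 * Q * Q) * a)%Z; [ring | rewrite H; ring].
  - transitivity ((P * P - 2 * Q * Q) * b)%Z; [ring | rewrite H; ring].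
Qed.

Lemma zmul_opp_cancel P Q ab : (P * P - 2 * Q * Q = 1)%Z -> zmul P Q (zmul P (- Q) ab) = ab.
Proof. intros H. rewrite <- (Z.opp_involutive Q) at 1. apply zmul_cancel. lia. Qed.

Definition lambda : R := 3 + 2 * sqrt 2.

Lemma lambda_gt1 : 1 < lambda.
Proof. unfold lambda. pose proof sqrt2_bounds. lra. Qed.

Lemma lambda_lt6 : lambda < 6.
Proof. unfold lambda. pose proof sqrt2_bounds. lra. Qed.

Lemma ln_lambda_pos : 0 < ln lambda.
Proof. rewrite <- ln_1. apply ln_increasing; pose proof lambda_gt1; lra. Qed.

Lemma lambda_pow_nat (n : nat) :
  exists P Q : Z, (P * P - 2 * Q * Q = 1)%Z /\ lambda ^ n = zsqrt2 P Q.
Proof.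
  induction n as [|n [P [Q [HPQ HP]]]].
  - exists 1%Z, 0%Z. split; [lia|]. unfold zsqrt2. simpl. ring.
  - exists (3 * P + 4 * Q)%Z, (2 * P + 3 * Q)%Z. split; [nia|].
    rewrite <- tech_pow_Rmult, Rmult_comm, HP.
    replace lambda with (zsqrt2 3 2) by reflexivity.
    rewrite zsqrt2_mul. f_equal; ring.
Qed.

Lemma lambda_zpow (m : Z) :
  exists P Q : Z, (P * P - 2 * Q * Q = 1)%Z /\
    Rpower lambda (IZR m) = zsqrt2_conj P Q /\ Rpower lambda (- IZR m) = zsqrt2 P Q.
Proof.
  assert (Hpow : forall n, Rpower lambda (INR n) = lambda ^ n)
    by (intros; apply Rpower_pow; pose proof lambda_gt1; lra).
  destruct (Z_le_gt_dec 0 m) as [Hm|Hm].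
  - destruct (lambda_pow_nat (Z.to_nat m)) as (P & Q & HPQ & HP).
    exists P, (- Q)%Z. rewrite zsqrt2_conj_opp, zsqrt2_opp.
    replace (IZR m) with (INR (Z.to_nat m)) by (rewrite INR_IZR_INZ, Z2Nat.id by lia; reflexivity).
    rewrite Rpower_Ropp, Hpow, HP, zsqrt2_inv by exact HPQ.
    split; [nia|split; reflexivity].
  - destruct (lambda_pow_nat (Z.to_nat (- m))) as (P & Q & HPQ & HP).
    exists P, Q.
    replace (IZR m) with (- INR (Z.to_nat (- m)))
      by (rewrite INR_IZR_INZ, Z2Nat.id, opp_IZR by lia; ring).
    rewrite Ropp_involutive, Rpower_Ropp, Hpow, HP, zsqrt2_inv by exact HPQ.
    split; [exact HPQ|split; reflexivity].
Qed.

Lemma lambda_scale D : 0 < D ->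
  1 <= Rpower lambda (- IZR (Int_part (ln D / ln lambda))) * D < lambda.
Proof.
  intros HD. pose proof ln_lambda_pos. pose proof lambda_gt1.
  destruct (Int_part_frac (ln D / ln lambda)) as [F1 F2].
  replace (Rpower lambda _ * D)
    with (exp ((ln D / ln lambda - IZR (Int_part (ln D / ln lambda))) * ln lambda)).
  2:{ unfold Rpower. rewrite <- (exp_ln D) at 4 by lra. rewrite <- exp_plus.
      f_equal. field. lra. }
  generalize dependent (ln D / ln lambda - IZR (Int_part (ln D / ln lambda))).
  intros e F1 F2. split.
  - pose proof (exp_ineq1_le (e * ln lambda)). nra.
  - rewrite <- (exp_ln lambda) at 2 by lra. apply exp_increasing. nra.
Qed.

Section Grid.

Variables s X0 X1 Y0 Y1 : R.

Definition in_box (a b : Z) : Prop :=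
  X0 <= IZR a + IZR b * s <= X1 /\ Y0 <= IZR a - IZR b * s <= Y1.

Definition col_lo (b : Z) : Z := Zceil (Rmax (X0 - IZR b * s) (Y0 + IZR b * s)).
Definition col_hi (b : Z) : Z := Int_part (Rmin (X1 - IZR b * s) (Y1 + IZR b * s)).

Definition column (b : Z) : list (Z * Z) :=
  map (fun a => (a, b)) (Zrange (col_lo b) (Z.to_nat (col_hi b - col_lo b + 1))).

Fixpoint columns (b : Z) (k : nat) : list (Z * Z) :=
  match k with
  | O => []
  | S k => column b ++ columns (b + 1) k
  end.

Definition b_lo : Z := Zceil ((X0 - Y1) / (2 * s)).
Definition b_hi : Z := Int_part ((X1 - Y0) / (2 * s)).
Definition ncols : nat := Z.to_nat (b_hi - b_lo + 1).
Definition grid_enum : list (Z * Z) := columns b_lo ncols.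

Lemma col_bounds_iff a b : (col_lo b <= a <= col_hi b)%Z <-> in_box a b.
Proof.
  unfold col_lo, col_hi, in_box. rewrite Zceil_le_iff, le_Int_part_iff.
  unfold Rmax, Rmin. destruct Rle_dec; destruct Rle_dec; lra.
Qed.

Lemma In_column a b b' : In (a, b') (column b) <-> b' = b /\ (col_lo b <= a <= col_hi b)%Z.
Proof.
  unfold column. rewrite in_map_iff. split.
  - intros (x & E & Hx). injection E as -> ->. rewrite In_Zrange in Hx. split; [auto|lia].
  - intros [-> H]. exists a. rewrite In_Zrange. split; [auto|lia].
Qed.

Lemma length_column b : length (column b) = Z.to_nat (col_hi b - col_lo b + 1).
Proof. unfold column. rewrite length_map, length_Zrange. reflexivity. Qed.

Lemma In_columns k b0 a b :
  In (a, b) (columns b0 k) <-> (b0 <= b < b0 + Z.of_nat k)%Z /\ (col_lo b <= a <= col_hi b)%Z.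
Proof.
  revert b0. induction k; intros b0; simpl; [lia|].
  rewrite in_app_iff, In_column, IHk. split.
  - intros [[-> H]|[H1 H2]]; split; lia.
  - intros [H1 H2]. destruct (Z.eq_dec b b0) as [->|]; [left|right]; split; auto; lia.
Qed.

Lemma NoDup_columns k b0 : NoDup (columns b0 k).
Proof.
  revert b0. induction k; intros b0; simpl; [constructor|].
  apply NoDup_app; auto.
  - unfold column. apply Injective_map_NoDup; [|apply NoDup_Zrange].
    intros u v E. injection E. auto.
  - intros [a b] H1 H2. apply In_column in H1. apply In_columns in H2. lia.
Qed.

Lemma in_box_b_range a b : 0 < s -> in_box a b -> (b_lo <= b <= b_hi)%Z.
Proof.
  intros Hs [HX HY]. unfold b_lo, b_hi. rewrite Zceil_le_iff, le_Int_part_iff.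
  rewrite Rdiv_le_iff, Rle_div_iff by lra. lra.
Qed.

Lemma In_grid_enum a b : 0 < s -> In (a, b) grid_enum <-> in_box a b.
Proof.
  intros Hs. unfold grid_enum, ncols. rewrite In_columns, col_bounds_iff.
  split; [tauto|]. intros H. pose proof (in_box_b_range a b Hs H). split; [lia|exact H].
Qed.

Lemma NoDup_grid_enum : NoDup grid_enum.
Proof. apply NoDup_columns. Qed.

Lemma b_lo_bound : 0 < s -> X0 - Y1 <= IZR b_lo * (2 * s).
Proof. intros Hs. apply Rdiv_le_iff; [lra|]. apply Zceil_le_iff, Z.le_refl. Qed.

Lemma b_hi_bound : 0 < s -> IZR b_hi * (2 * s) <= X1 - Y0.
Proof. intros Hs. apply Rle_div_iff; [lra|]. apply le_Int_part_iff, Z.le_refl. Qed.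

Lemma length_columns_ge_inner k b0 :
  (forall b, (b0 <= b < b0 + Z.of_nat k - 1)%Z -> (col_lo b <= col_hi b)%Z) ->
  (k <= length (columns b0 k) + 1)%nat.
Proof.
  revert b0. induction k as [|k IH]; intros b0 H; [lia|].
  simpl. rewrite length_app, length_column. destruct k as [|k]; [lia|].
  pose proof (IH (b0 + 1)%Z ltac:(intros b Hb; apply H; lia)).
  pose proof (H b0 ltac:(lia)). lia.
Qed.

Lemma length_columns_ge k b0 :
  (forall b, (b0 < b < b0 + Z.of_nat k - 1)%Z -> (col_lo b <= col_hi b)%Z) ->
  (k <= length (columns b0 k) + 2)%nat.
Proof.
  destruct k as [|k]; intros H; simpl; [lia|]. rewrite length_app.
  pose proof (length_columns_ge_inner k (b0 + 1) ltac:(intros b Hb; apply H; lia)). lia.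
Qed.

Lemma col_nonempty_inner b : 1 / 2 <= s -> 1 <= X1 - X0 -> 1 <= Y1 - Y0 ->
  (b_lo < b < b_hi)%Z -> (col_lo b <= col_hi b)%Z.
Proof.
  intros Hs HX HY Hb.
  pose proof (b_lo_bound ltac:(lra)). pose proof (b_hi_bound ltac:(lra)).
  assert (IZR b_lo + 1 <= IZR b) by (rewrite <- plus_IZR; apply IZR_le; lia).
  assert (IZR b + 1 <= IZR b_hi) by (rewrite <- plus_IZR; apply IZR_le; lia).
  assert (X0 - Y1 + 2 * s <= 2 * (IZR b * s)) by nra.
  assert (2 * (IZR b * s) + 2 * s <= X1 - Y0) by nra.
  unfold col_lo, col_hi. apply le_Int_part_iff.
  pose proof (Zceil_lt (Rmax (X0 - IZR b * s) (Y0 + IZR b * s))).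
  unfold Rmax, Rmin in *. destruct Rle_dec; destruct Rle_dec; lra.
Qed.

Lemma ncols_le_wide : 1 / 2 <= s -> 1 <= X1 - X0 -> 1 <= Y1 - Y0 ->
  (ncols <= length grid_enum + 2)%nat.
Proof.
  intros Hs HX HY. apply length_columns_ge. intros b Hb.
  apply col_nonempty_inner; auto. unfold ncols in Hb. lia.
Qed.

Lemma ncols_le_narrow : 4 / 3 < s -> (X1 - X0) + (Y1 - Y0) < 8 -> (ncols <= 3)%nat.
Proof.
  intros Hs Hw. pose proof (b_lo_bound ltac:(lra)). pose proof (b_hi_bound ltac:(lra)).
  unfold ncols. destruct (Z_le_gt_dec (b_hi - b_lo) 2); [lia|].
  assert (3 <= IZR b_hi - IZR b_lo) by (rewrite <- minus_IZR; apply IZR_le; lia).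
  nra.
Qed.

End Grid.

Lemma in_box_zmul_iff x0 x1 y0 y1 P Q a b :
  (P * P - 2 * Q * Q = 1)%Z -> 0 < zsqrt2 P Q ->
  in_box (sqrt 2) (zsqrt2_conj P Q * x0) (zsqrt2_conj P Q * x1)
    (zsqrt2 P Q * y0) (zsqrt2 P Q * y1) a b <->
  grid1d_sol x0 x1 y0 y1 (fst (zmul P Q (a, b))) (snd (zmul P Q (a, b))).
Proof.
  intros HPQ Hw. pose proof (zsqrt2_norm P Q) as Hn. rewrite HPQ in Hn.
  unfold grid1d_sol, in_box, zmul; cbn [fst snd].
  rewrite <- zsqrt2_mul, <- zsqrt2_conj_mul.
  change (IZR a + IZR b * sqrt 2) with (zsqrt2 a b).
  change (IZR a - IZR b * sqrt 2) with (zsqrt2_conj a b).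
  generalize (zsqrt2 a b) (zsqrt2_conj a b).
  generalize dependent (zsqrt2 P Q). generalize dependent (zsqrt2_conj P Q).
  intros w' w Hw Hn u u'. assert (0 < w') by nra. assert (w' * w = 1) by lra.
  rewrite (Rmult_le_inv_l w' w), (Rmult_ge_inv_l w' w), (Rmult_le_inv_l w w'),
    (Rmult_ge_inv_l w w') by assumption.
  tauto.
Qed.

Lemma enumerates_zmul_image x0 x1 y0 y1 P Q (G : list (Z * Z)) :
  (P * P - 2 * Q * Q = 1)%Z -> 0 < zsqrt2 P Q -> NoDup G ->
  (forall a b, In (a, b) G <-> in_box (sqrt 2) (zsqrt2_conj P Q * x0) (zsqrt2_conj P Q * x1)
                                  (zsqrt2 P Q * y0) (zsqrt2 P Q * y1) a b) ->
  enumerates_grid1d x0 x1 y0 y1 (map (fun ab => IZR_pair (zmul P Q ab)) G).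
Proof.
  intros HPQ Hw HG HinG. split; [|split].
  - apply Injective_map_NoDup; [|exact HG].
    intros ab ab' E. apply IZR_pair_inj in E.
    rewrite <- (zmul_cancel P Q ab), <- (zmul_cancel P Q ab'), E by exact HPQ.
    reflexivity.
  - intros pt Hpt. apply in_map_iff in Hpt. destruct Hpt as ([a b] & <- & Hab).
    exists (fst (zmul P Q (a, b))), (snd (zmul P Q (a, b))). split; [reflexivity|].
    apply in_box_zmul_iff, HinG; assumption.
  - intros a b Hab. apply in_map_iff. exists (zmul P (- Q) (a, b)).
    rewrite zmul_opp_cancel by exact HPQ. split; [reflexivity|].
    rewrite (surjective_pairing (zmul P (- Q) (a, b))).
    apply HinG, in_box_zmul_iff; [exact HPQ|exact Hw|].
    rewrite <- surjective_pairing, zmul_opp_cancel by exact HPQ. exact Hab.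
Qed.

Definition mul_coords (p q : R) (ab : Z * Z) : R * R :=
  (p * IZR (fst ab) + 2 * (q * IZR (snd ab)), q * IZR (fst ab) + p * IZR (snd ab)).

Lemma mul_coords_IZR P Q ab : mul_coords (IZR P) (IZR Q) ab = IZR_pair (zmul P Q ab).
Proof.
  unfold mul_coords, IZR_pair, zmul. cbn [fst snd].
  rewrite !plus_IZR, !mult_IZR. f_equal; ring.
Qed.

Lemma exec_add p n m s :
  exec p (n + m) s = match exec p n s with Some s' => exec p m s' | None => None end.
Proof. revert s. induction n; intros s; simpl; auto. destruct (step p s); auto. Qed.

(* Registers: 0-3 hold the input, 4 = 2, 5 = 1, 7 = sqrt 2, 13 = 0 (so that [IJle 13 13 l]
   is an unconditional jump), 19-22 the scaled bounds X0 X1 Y0 Y1, 23-24 the coordinates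
   p, q of the unit multiplier, 26-27 the current b and its upper bound, 29-30 the current
   a and its upper bound.  Instruction 42 heads the loop over b, instruction 63 the loop
   over a.  The no-ops give both branches of each test the same length. *)
Definition nop := IBin OAdd 41 41 13.
Definition prog : list instr := [
 IConst 4 2; IConst 5 1; IBin ODiv 6 5 4; IBin OPow 7 4 6; IConst 8 3;
 IBin OMul 9 4 7; IBin OAdd 9 8 9; ILn 10 9; IBin OSub 11 1 0; IBin OSub 12 3 2;
 (*10*) IConst 13 0; IJle 11 13 17; ILn 14 11; IBin ODiv 14 14 10; IFloor 14 14;
 (*15*) IBin OSub 15 13 14; IJle 13 13 22; ILn 14 12; IBin ODiv 14 14 10; IFloor 15 14;
 (*20*) nop; nop; IBin OPow 16 9 15; IBin OSub 18 13 15; IBin OPow 17 9 18;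
 (*25*) IBin OMul 19 16 0; IBin OMul 20 16 1; IBin OMul 21 17 2; IBin OMul 22 17 3; IBin OMul 25 4 7;
 (*30*) IBin OAdd 23 17 16; IBin ODiv 23 23 4; IBin OSub 24 17 16; IBin ODiv 24 24 25; IBin OSub 26 19 22;
 (*35*) IBin ODiv 26 26 25; IBin OSub 26 13 26; IFloor 26 26; IBin OSub 26 13 26; IBin OSub 27 20 21;
 (*40*) IBin ODiv 27 27 25; IFloor 27 27; IJle 26 27 44; IHalt; IBin OMul 28 26 7;
 (*45*) IBin OSub 31 19 28; IBin OAdd 32 21 28; IBin OSub 33 20 28; IBin OAdd 34 22 28; IJle 31 32 52;
 (*50*) IBin OAdd 35 31 13; IJle 13 13 54; IBin OAdd 35 32 13; nop; IJle 33 34 57;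
 (*55*) IBin OAdd 36 34 13; IJle 13 13 59; IBin OAdd 36 33 13; nop; IBin OSub 29 13 35;
 (*60*) IFloor 29 29; IBin OSub 29 13 29; IFloor 30 36; IJle 29 30 66; IBin OAdd 26 26 5;
 (*65*) IJle 13 13 42; IBin OMul 37 23 29; IBin OMul 38 24 26; IBin OMul 38 4 38; IBin OAdd 37 37 38;
 (*70*) IBin OMul 39 24 29; IBin OMul 40 23 26; IBin OAdd 39 39 40; IOut 37 39; IBin OAdd 29 29 5;
 (*75*) IJle 13 13 63 ].

Ltac reduce_exec := lazy [exec step nth_error prog nop pc regs out upd Nat.eqb eval_binop].
Ltac simulate :=
  reduce_exec;
  repeat (match goal with |- context [Rle_dec ?x ?x] =>
            destruct (Rle_dec x x) as [_|Hxx]; [|exfalso; exact (Hxx (Rle_refl x))] end;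
          reduce_exec).

Ltac exists_final_regs :=
  match goal with |- exists r', Some (mkState _ ?rf _) = _ /\ _ => exists rf end.

Section Loop.

Variables (X0 X1 Y0 Y1 p q : R) (bmax : Z).

Definition loop_regs (r : nat -> R) : Prop :=
  r 4%nat = 2 /\ r 5%nat = 1 /\ r 7%nat = sqrt 2 /\ r 13%nat = 0 /\
  r 19%nat = X0 /\ r 20%nat = X1 /\ r 21%nat = Y0 /\ r 22%nat = Y1 /\
  r 23%nat = p /\ r 24%nat = q /\ r 27%nat = IZR bmax.

Ltac loop_regs_step := unfold loop_regs; repeat split; simulate; assumption.

Lemma exec_point r o a amax b :
  loop_regs r -> r 26%nat = IZR b -> r 29%nat = IZR a -> r 30%nat = IZR amax -> (a <= amax)%Z ->
  exists r', exec prog 11 (mkState 63 r o) = Some (mkState 63 r' (o ++ [mul_coords p q (a, b)])) /\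
    loop_regs r' /\ r' 26%nat = IZR b /\ r' 29%nat = IZR (a + 1) /\ r' 30%nat = IZR amax.
Proof.
  intros Hr Hb Ha Hamax Hle.
  pose proof Hr as (H4 & H5 & H7 & H13 & H19 & H20 & H21 & H22 & H23 & H24 & H27).
  simulate. destruct (Rle_dec (r 29%nat) (r 30%nat)) as [_|Hn].
  2:{ exfalso. apply Hn. rewrite Ha, Hamax. apply IZR_le, Hle. }
  simulate. exists_final_regs. split; [|split; [|split; [|split]]].
  - unfold mul_coords; cbn [fst snd]. rewrite H23, H24, Ha, Hb, H4. reflexivity.
  - loop_regs_step.
  - simulate. assumption.
  - simulate. rewrite Ha, H5, plus_IZR. reflexivity.
  - simulate. assumption.
Qed.

Lemma exec_column_tail k r o a amax b :
  loop_regs r -> r 26%nat = IZR b -> r 29%nat = IZR a -> r 30%nat = IZR amax ->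
  k = Z.to_nat (amax - a + 1) ->
  exists r', exec prog (11 * k + 3) (mkState 63 r o)
      = Some (mkState 42 r' (o ++ map (mul_coords p q) (map (fun a => (a, b)) (Zrange a k)))) /\
    loop_regs r' /\ r' 26%nat = IZR (b + 1).
Proof.
  revert r o a. induction k as [|k IH]; intros r o a Hr Hb Ha Hamax Hk.
  - pose proof Hr as (H4 & H5 & H7 & H13 & H19 & H20 & H21 & H22 & H23 & H24 & H27).
    change (11 * 0 + 3)%nat with 3%nat. simulate.
    destruct (Rle_dec (r 29%nat) (r 30%nat)) as [Hle|_].
    { exfalso. rewrite Ha, Hamax in Hle. apply le_IZR in Hle. lia. }
    simulate. exists_final_regs. rewrite app_nil_r.
    split; [reflexivity|split; [loop_regs_step|]].
    simulate. rewrite Hb, H5, plus_IZR. reflexivity.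
  - destruct (exec_point r o a amax b Hr Hb Ha Hamax ltac:(lia))
      as (r1 & E1 & Hr1 & Hb1 & Ha1 & Hamax1).
    destruct (IH r1 (o ++ [mul_coords p q (a, b)]) (a + 1)%Z Hr1 Hb1 Ha1 Hamax1 ltac:(lia))
      as (r' & E & Hr' & Hb').
    exists r'. split; [|split; assumption].
    replace (11 * S k + 3)%nat with (11 + (11 * k + 3))%nat by lia.
    rewrite exec_add, E1, E, <- app_assoc. reflexivity.
Qed.

Lemma exec_column_head r o b :
  loop_regs r -> r 26%nat = IZR b -> (b <= bmax)%Z ->
  exists r', exec prog 16 (mkState 42 r o) = Some (mkState 63 r' o) /\
    loop_regs r' /\ r' 26%nat = IZR b /\
    r' 29%nat = IZR (col_lo (sqrt 2) X0 Y0 b) /\ r' 30%nat = IZR (col_hi (sqrt 2) X1 Y1 b).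
Proof.
  intros Hr Hb Hbmax.
  pose proof Hr as (H4 & H5 & H7 & H13 & H19 & H20 & H21 & H22 & H23 & H24 & H27).
  simulate. destruct (Rle_dec (r 26%nat) (r 27%nat)) as [_|Hn].
  2:{ exfalso. apply Hn. rewrite Hb, H27. apply IZR_le, Hbmax. }
  simulate. rewrite ?H19, ?H20, ?H21, ?H22, ?Hb, ?H7.
  unfold col_lo, col_hi, Zceil, Rmax, Rmin.
  destruct (Rle_dec (X0 - IZR b * sqrt 2) (Y0 + IZR b * sqrt 2)); simulate;
  destruct (Rle_dec (X1 - IZR b * sqrt 2) (Y1 + IZR b * sqrt 2)); simulate;
  exists_final_regs;
    (split; [reflexivity|split; [loop_regs_step|]]);
    simulate; rewrite ?H13, ?Rplus_0_r, ?Rminus_0_l, ?opp_IZR; auto.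
Qed.

Lemma exec_column r o b :
  loop_regs r -> r 26%nat = IZR b -> (b <= bmax)%Z ->
  exists r', exec prog (19 + 11 * length (column (sqrt 2) X0 X1 Y0 Y1 b)) (mkState 42 r o)
      = Some (mkState 42 r' (o ++ map (mul_coords p q) (column (sqrt 2) X0 X1 Y0 Y1 b))) /\
    loop_regs r' /\ r' 26%nat = IZR (b + 1).
Proof.
  intros Hr Hb Hbmax.
  destruct (exec_column_head r o b Hr Hb Hbmax) as (r1 & E1 & Hr1 & Hb1 & Hlo & Hhi).
  destruct (exec_column_tail _ r1 o _ _ b Hr1 Hb1 Hlo Hhi eq_refl) as (r2 & E2 & Hr2 & Hb2).
  exists r2. split; [|split; assumption].
  assert (Hsplit : forall m, (19 + 11 * m = 16 + (11 * m + 3))%nat) by lia.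
  rewrite length_column, Hsplit, exec_add, E1, E2. reflexivity.
Qed.

Lemma exec_columns k r o b :
  loop_regs r -> r 26%nat = IZR b -> k = Z.to_nat (bmax - b + 1) ->
  exists n s', exec prog n (mkState 42 r o) = Some s' /\ step prog s' = None /\
    out s' = o ++ map (mul_coords p q) (columns (sqrt 2) X0 X1 Y0 Y1 b k) /\
    (n <= 19 * k + 11 * length (columns (sqrt 2) X0 X1 Y0 Y1 b k) + 1)%nat.
Proof.
  revert r o b. induction k as [|k IH]; intros r o b Hr Hb Hk.
  - pose proof Hr as (H4 & H5 & H7 & H13 & H19 & H20 & H21 & H22 & H23 & H24 & H27).
    exists 1%nat. simulate. destruct (Rle_dec (r 26%nat) (r 27%nat)) as [Hle|_].
    { exfalso. rewrite Hb, H27 in Hle. apply le_IZR in Hle. lia. }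
    simulate. eexists. split; [reflexivity|]. split; [reflexivity|].
    simpl. rewrite app_nil_r. split; [reflexivity|lia].
  - destruct (exec_column r o b Hr Hb ltac:(lia)) as (r1 & E1 & Hr1 & Hb1).
    destruct (IH r1 (o ++ map (mul_coords p q) (column (sqrt 2) X0 X1 Y0 Y1 b)) (b + 1)%Z
                 Hr1 Hb1 ltac:(lia)) as (n & s' & E & Hstop & Hout & Hn).
    exists (19 + 11 * length (column (sqrt 2) X0 X1 Y0 Y1 b) + n)%nat, s'.
    rewrite exec_add, E1, E. split; [reflexivity|split; [exact Hstop|split]].
    + rewrite Hout. simpl. rewrite map_app, app_assoc. reflexivity.
    + simpl. rewrite length_app. lia.
Qed.

End Loop.

Section Scaling.

Variables x0 x1 y0 y1 : R.

(* When A is a point the width of B is normalised instead; when both are points the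
   exponent is junk (ln 0), which is harmless. *)
Definition scale_exp : Z :=
  if Rle_dec (x1 - x0) 0 then Int_part (ln (y1 - y0) / ln lambda)
  else (- Int_part (ln (x1 - x0) / ln lambda))%Z.

Definition muA : R := Rpower lambda (IZR scale_exp).
Definition muB : R := Rpower lambda (- IZR scale_exp).
Definition mult_p : R := (muB + muA) / 2.
Definition mult_q : R := (muB - muA) / (2 * sqrt 2).
Definition scaled_enum : list (Z * Z) :=
  grid_enum (sqrt 2) (muA * x0) (muA * x1) (muB * y0) (muB * y1).

Lemma scaled_widths : x0 <= x1 -> y0 <= y1 ->
  (1 <= muA * x1 - muA * x0 /\ 1 <= muB * y1 - muB * y0) \/
  (muA * x1 - muA * x0) + (muB * y1 - muB * y0) < 8.
Proof.
  intros Hx Hy. pose proof lambda_lt6.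
  assert (0 < muB) by (unfold muB, Rpower; apply exp_pos).
  replace (muA * x1 - muA * x0) with (muA * (x1 - x0)) by ring.
  replace (muB * y1 - muB * y0) with (muB * (y1 - y0)) by ring.
  assert (0 <= muB * (y1 - y0)) by (apply Rmult_le_pos; lra).
  destruct (Rle_dec (x1 - x0) 0) as [Hx0|Hx0].
  - right. replace (x1 - x0) with 0 by lra. rewrite Rmult_0_r.
    destruct (Rle_lt_or_eq_dec 0 (y1 - y0)) as [Hpos| <-]; [lra| |].
    + assert (1 <= muB * (y1 - y0) < lambda); [|lra].
      unfold muB, scale_exp. destruct (Rle_dec (x1 - x0) 0); [|lra].
      apply lambda_scale, Hpos.
    + rewrite Rmult_0_r. lra.
  - assert (1 <= muA * (x1 - x0) < lambda).
    { unfold muA, scale_exp. destruct (Rle_dec (x1 - x0) 0); [lra|].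
      rewrite opp_IZR. apply lambda_scale. lra. }
    destruct (Rle_dec 1 (muB * (y1 - y0))); [left|right]; lra.
Qed.

Lemma exec_init : exists r,
  exec prog 37 (init_state x0 x1 y0 y1) = Some (mkState 42 r []) /\
  loop_regs (muA * x0) (muA * x1) (muB * y0) (muB * y1) mult_p mult_q
    (b_hi (sqrt 2) (muA * x1) (muB * y0)) r /\
  r 26%nat = IZR (b_lo (sqrt 2) (muA * x0) (muB * y1)).
Proof.
  unfold init_state. simulate. rewrite Rpower_2_half.
  unfold loop_regs, mult_p, mult_q, muA, muB, scale_exp, b_lo, b_hi, Zceil, lambda.
  destruct (Rle_dec (x1 - x0) 0); simulate; exists_final_regs;
    (split; [reflexivity|]); repeat split; simulate;
    rewrite ?Rminus_0_l, ?opp_IZR; reflexivity.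
Qed.

Lemma prog_halts : exists n,
  halts_with prog (init_state x0 x1 y0 y1) n (map (mul_coords mult_p mult_q) scaled_enum) /\
  (n <= 38 + 19 * ncols (sqrt 2) (muA * x0) (muA * x1) (muB * y0) (muB * y1)
          + 11 * length scaled_enum)%nat.
Proof.
  destruct exec_init as (r & E0 & Hr & Hb).
  destruct (exec_columns _ _ _ _ _ _ _ _ r [] _ Hr Hb eq_refl)
    as (n & s' & E & Hstop & Hout & Hn).
  exists (37 + n)%nat. split.
  - exists s'. rewrite exec_add, E0. split; [exact E|split; [exact Hstop|exact Hout]].
  - unfold scaled_enum, grid_enum, ncols in *. lia.
Qed.

Lemma scaled_outputs_enumerate :
  enumerates_grid1d x0 x1 y0 y1 (map (mul_coords mult_p mult_q) scaled_enum).
Proof.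
  destruct (lambda_zpow scale_exp) as (P & Q & HPQ & HA & HB).
  fold muA in HA. fold muB in HB. pose proof sqrt2_bounds.
  assert (Hp : mult_p = IZR P).
  { unfold mult_p. rewrite HA, HB. unfold zsqrt2, zsqrt2_conj. field. }
  assert (Hq : mult_q = IZR Q).
  { unfold mult_q. rewrite HA, HB. unfold zsqrt2, zsqrt2_conj. field. lra. }
  rewrite Hp, Hq, (map_ext _ (fun ab => IZR_pair (zmul P Q ab)) (mul_coords_IZR P Q)).
  apply enumerates_zmul_image; [exact HPQ| | |].
  - rewrite <- HB. unfold muB, Rpower. apply exp_pos.
  - apply NoDup_grid_enum.
  - intros a b. rewrite <- HA, <- HB. apply (In_grid_enum (sqrt 2)). lra.
Qed.

Lemma scaled_ncols_bound : x0 <= x1 -> y0 <= y1 ->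
  (ncols (sqrt 2) (muA * x0) (muA * x1) (muB * y0) (muB * y1) <= length scaled_enum + 3)%nat.
Proof.
  intros Hx Hy. pose proof sqrt2_bounds.
  destruct (scaled_widths Hx Hy) as [[HA HB]|Hw].
  - pose proof (ncols_le_wide (sqrt 2) _ _ _ _ ltac:(lra) HA HB). unfold scaled_enum. lia.
  - pose proof (ncols_le_narrow (sqrt 2) _ _ _ _ ltac:(lra) Hw). lia.
Qed.

End Scaling.

Theorem proposition5p27 :
  exists (p : list instr) (C : nat),
    forall x0 x1 y0 y1 : R, x0 <= x1 -> y0 <= y1 ->
      exists (n : nat) (L : list (R * R)),
        halts_with p (init_state x0 x1 y0 y1) n L /\
        enumerates_grid1d x0 x1 y0 y1 L /\
        (n <= C * (length L + 1))%nat.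
Proof.
  exists prog, 95%nat. intros x0 x1 y0 y1 Hx Hy.
  destruct (prog_halts x0 x1 y0 y1) as (n & Hhalt & Hn).
  exists n, (map (mul_coords (mult_p x0 x1 y0 y1) (mult_q x0 x1 y0 y1)) (scaled_enum x0 x1 y0 y1)).
  split; [exact Hhalt|split; [apply scaled_outputs_enumerate|]].
  rewrite length_map. pose proof (scaled_ncols_bound x0 x1 y0 y1 Hx Hy). lia.
Qed.
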